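(* Let $k$ be a field and $\mathsf{E}$ a left strictly locally finite $k$-linear category. Then the class of contrafinite left $\mathsf{E}$-modules is closed under extensions in the category of left $\mathsf{E}$-modules: if $0\to P\to T\to Q\to0$ is a short exact sequence of left $\mathsf{E}$-modules with $P$ and $Q$ contrafinite, then $T$ is contrafinite.
   Context: A small $k$-linear category $\mathsf{E}$ has $k$-vector spaces $\operatorname{Hom}_\mathsf{E}(x,y)$, $k$-bilinear associative composition and identities with $\mathrm{id}_x\ne0$. A left $\mathsf{E}$-module is a $k$-linear functor $P:\mathsf{E}\to k\text{-Vect}$ (action maps $\operatorname{Hom}_\mathsf{E}(x,y)\otimes_kP(x)\to P(y)$). Write $x\preceq y$ if there are $n\ge1$ and objects $x=z_0,\dots,z_n=y$ with $\operatorname{Hom}_\mathsf{E}(z_{i-1},z_i)\neq0$ for all $i$; $x\prec y$ means $x\preceq y$ and not $y\preceq x$. $\mathsf{E}$ is locally finite if all Hom spaces are finite-dimensional and every $\{z:x\preceq z\preceq y\}$ is finite; left strictly locally finite if moreover for every $y$ there is a finite set $X_y$ of objects with $x\prec y$ for $x\in X_y$ such that every $f:z\to y$ with $z\prec y$ equals $\sum_{i=1}^nh_ig_i$ ($n\ge0$) with $g_i:z\to x_i$, $h_i:x_i\to y$, $x_i\in X_y$. A left $\mathsf{E}$-module $P$ is contrafinite if for every object $y$ there is a finite set of objects $A$ such that the action map $\operatorname{Hom}_\mathsf{E}(x,y)\otimes_kP(x)\to P(y)$ vanishes for all $x\notin A$. *)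

From HB Require Import structures.
From mathcomp Require Import all_boot all_order all_algebra.
From Stdlib Require List.
Set Implicit Arguments. Unset Strict Implicit. Unset Printing Implicit Defensive.
Import GRing.Theory.

Local Open Scope ring_scope.

Record klinCat (k : fieldType) := KLinCat {
  Ob : Type;
  Hom : Ob -> Ob -> lmodType k;
  comp : forall x y z : Ob, Hom y z -> Hom x y -> Hom x z;
  idm : forall x : Ob, Hom x x;
  comp_linl : forall x y z (a : k) (h h' : Hom y z) (g : Hom x y),
      comp (a *: h + h') g = a *: comp h g + comp h' g;
  comp_linr : forall x y z (a : k) (h : Hom y z) (g g' : Hom x y),
      comp h (a *: g + g') = a *: comp h g + comp h g';
  comp_assoc : forall w x y z (h : Hom y z) (g : Hom x y) (f : Hom w x),
      comp h (comp g f) = comp (comp h g) f;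
  comp_idl : forall x y (f : Hom x y), comp (idm y) f = f;
  comp_idr : forall x y (f : Hom x y), comp f (idm x) = f;
  idm_neq0 : forall x, idm x != 0
}.


Section Defs.
Variables (k : fieldType) (E : klinCat k).

Definition findim (V : lmodType k) : Prop :=
  exists n (v : 'I_n -> V), forall f : V,
    exists c : 'I_n -> k, f = \sum_(i < n) c i *: v i.

Definition fin_obs (A : Ob E -> Prop) : Prop :=
  exists s : seq (Ob E), forall z, A z -> List.In z s.

Definition hom_nz (x y : Ob E) : Prop := exists f : Hom x y, f != 0.

Inductive preceq : Ob E -> Ob E -> Prop :=
  | preceq_step x y : hom_nz x y -> preceq x y
  | preceq_cons x z y : hom_nz x z -> preceq z y -> preceq x y.

Definition prec (x y : Ob E) : Prop := preceq x y /\ ~ preceq y x.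

Definition locally_finite : Prop :=
  (forall x y : Ob E, findim (Hom x y)) /\
  (forall x y, fin_obs (fun z => preceq x z /\ preceq z y)).

Definition left_strictly_locally_finite : Prop :=
  locally_finite /\
  forall y : Ob E, exists X : seq (Ob E),
    (forall x, List.In x X -> prec x y) /\
    forall z (f : Hom z y), prec z y ->
      exists n (xs : 'I_n -> Ob E)
             (g : forall i, Hom z (xs i)) (h : forall i, Hom (xs i) y),
        (forall i, List.In (xs i) X) /\
        f = \sum_(i < n) comp (h i) (g i).

(* Left E-modules: k-linear functors E -> k-Vect. *)
Record lmodule := LModule {
  Mob : Ob E -> lmodType k;
  act : forall x y, Hom x y -> Mob x -> Mob y;
  act_linl : forall x y (a : k) (f f' : Hom x y) (p : Mob x),
      act (a *: f + f') p = a *: act f p + act f' p;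
  act_linr : forall x y (a : k) (f : Hom x y) (p p' : Mob x),
      act f (a *: p + p') = a *: act f p + act f p';
  act_comp : forall x y z (g : Hom y z) (f : Hom x y) (p : Mob x),
      act (comp g f) p = act g (act f p);
  act_id : forall x (p : Mob x), act (idm x) p = p
}.
Arguments act _ {x y}.

Definition is_morphism (P Q : lmodule) (phi : forall x, Mob P x -> Mob Q x) : Prop :=
  (forall x (a : k) (p p' : Mob P x), phi x (a *: p + p') = a *: phi x p + phi x p') /\
  (forall x y (f : Hom x y) (p : Mob P x), phi y (act P f p) = act Q f (phi x p)).

Definition short_exact (P T Q : lmodule)
    (i : forall x, Mob P x -> Mob T x) (p : forall x, Mob T x -> Mob Q x) : Prop :=
  is_morphism i /\ is_morphism p /\
  (forall x, injective (i x)) /\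
  (forall x (q : Mob Q x), exists t, p x t = q) /\
  (forall x (t : Mob T x), p x t = 0 <-> exists u, i x u = t).

Definition contrafinite (P : lmodule) : Prop :=
  forall y : Ob E, exists A : seq (Ob E),
    forall x, ~ List.In x A ->
      forall (f : Hom x y) (v : Mob P x), act P f v = 0.

End Defs.

(* Fix y and a finite set A witnessing that P is contrafinite at y, and call a
   finite set B good for w (vanishes_through T w y B) if every composite
   x -> w -> y with x outside B acts by zero on T.  If P is killed by all maps
   w -> y, e.g. when w is outside A, a set witnessing contrafiniteness of Q at
   w is good: for x outside it the image of T(x) in T(w) lies in P(w).  In
   general, a nonzero map x -> w with x not strictly below w has x in the
   finite class {z | w <= z <= w}, and a map from x strictly below w factors
   through the finite set X_w of objects strictly below w; so that class
   together with good sets for X_w is good for w.  The recursion only descends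
   along the strict order inside the finite set A, so it is well founded, and
   w = y gives the theorem. *)

From mathcomp Require Import all_boot all_order all_algebra.
From Stdlib Require Import Classical.
From Stdlib Require List.
Set Implicit Arguments.
Unset Strict Implicit.
Unset Printing Implicit Defensive.
Import GRing.Theory.
Local Open Scope ring_scope.

Section LinearMap.
Variables (k : fieldType) (V W : lmodType k) (f : V -> W).
Hypothesis f_linear : forall a u v, f (a *: u + v) = a *: f u + f v.

Lemma linear_map0 : f 0 = 0.
Proof.
have f00 := f_linear 1 0 0; rewrite !scale1r addr0 in f00.
by apply: (addrI (f 0)); rewrite addr0 -f00.
Qed.

Lemma linear_mapD u v : f (u + v) = f u + f v.
Proof. by have := f_linear 1 u v; rewrite !scale1r. Qed.

End LinearMap.

Lemma wf_strict_order_on_seq (T : Type) (R : T -> T -> Prop) (s : seq T) :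
  (forall x y z, R x y -> R y z -> R x z) -> (forall x, ~ R x x) ->
  well_founded (fun x y => R x y /\ List.In x s).
Proof.
move=> R_trans R_irr; elim: s => [|a s IHs] y; first by constructor=> x [].
have acc_below_a x : Acc (fun x y => R x y /\ List.In x s) x -> R x a ->
    Acc (fun x y => R x y /\ List.In x (a :: s)) x.
  elim=> {}x _ IHx Rxa; constructor=> z [Rzx [az | zs]].
    by rewrite -az in Rzx; case: (R_irr a (R_trans _ _ _ Rzx Rxa)).
  exact: IHx (conj Rzx zs) (R_trans _ _ _ Rzx Rxa).
have acc_a : Acc (fun x y => R x y /\ List.In x (a :: s)) a.
  constructor=> z [Rza [az | zs]].
    by rewrite -az in Rza; case: (R_irr _ Rza).
  exact: acc_below_a (IHs z) Rza.
elim: (IHs y) => {}y _ IHy; constructor=> z [Rzy [<- | zs]]; first exact: acc_a.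
exact: IHy (conj Rzy zs).
Qed.

Lemma upclosed_finite_choice (I U : Type) (Pr : I -> seq U -> Prop)
    (X : seq I) :
  (forall x B B', Pr x B -> (forall z, List.In z B -> List.In z B') ->
    Pr x B') ->
  (forall x, List.In x X -> exists B, Pr x B) ->
  exists B, forall x, List.In x X -> Pr x B.
Proof.
move=> Pr_up; elim: X => [|x X IH] exPr; first by exists [::].
have [B PrB] := exPr x (or_introl erefl).
have [B' PrB'] := IH (fun z zX => exPr z (or_intror zX)).
exists (B ++ B') => z [<- | zX].
  by apply: Pr_up PrB _ => u uB; apply: List.in_or_app; left.
by apply: Pr_up (PrB' z zX) _ => u uB'; apply: List.in_or_app; right.
Qed.

Section Category.
Variables (k : fieldType) (E : klinCat k).

Lemma preceq_trans (x y z : Ob E) : preceq x y -> preceq y z -> preceq x z.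
Proof.
elim=> [a b ab | a c b ac _ IH] yz; first exact: preceq_cons ab yz.
exact: preceq_cons ac (IH yz).
Qed.

Lemma prec_trans (x y z : Ob E) : prec x y -> prec y z -> prec x z.
Proof.
move=> [xy nyx] [yz nzy]; split; first exact: preceq_trans xy yz.
by move=> zx; apply: nyx; apply: preceq_trans yz zx.
Qed.

Lemma prec_irrefl (x : Ob E) : ~ prec x x.
Proof. by case. Qed.

Lemma comp0 (x y z : Ob E) (h : Hom y z) : comp h (0 : Hom x y) = 0.
Proof. exact: linear_map0 (fun a (g g' : Hom x y) => comp_linr a h g g'). Qed.

Lemma compD (x y z : Ob E) (h : Hom y z) (g g' : Hom x y) :
  comp h (g + g') = comp h g + comp h g'.
Proof.
exact: (linear_mapD (fun a (g g' : Hom x y) => comp_linr a h g g') g g').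
Qed.

Lemma act0 (T : lmodule E) (x y : Ob E) (t : Mob T x) : act (0 : Hom x y) t = 0.
Proof. exact: linear_map0 (fun a (f f' : Hom x y) => act_linl a f f' t). Qed.

Lemma actD (T : lmodule E) (x y : Ob E) (f f' : Hom x y) (t : Mob T x) :
  act (f + f') t = act f t + act f' t.
Proof.
exact: (linear_mapD (fun a (f f' : Hom x y) => act_linl a f f' t) f f').
Qed.

Definition vanishes_through (T : lmodule E) (w y : Ob E) (B : seq (Ob E)) :
    Prop :=
  forall x, ~ List.In x B ->
    forall (g : Hom x w) (h : Hom w y) (t : Mob T x), act (comp h g) t = 0.

Lemma vanishes_throughS (T : lmodule E) (w y : Ob E) (B B' : seq (Ob E)) :
  vanishes_through T w y B -> (forall z, List.In z B -> List.In z B') ->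
  vanishes_through T w y B'.
Proof. by move=> vanB BB' x xB'; apply: vanB => /BB'. Qed.

Lemma vanishes_through_below (T : lmodule E) (w y : Ob E) :
  left_strictly_locally_finite E ->
  exists X, (forall x, List.In x X -> prec x w) /\
    forall B, (forall x, List.In x X -> vanishes_through T x y B) ->
      exists B', vanishes_through T w y B'.
Proof.
move=> [[_ fin_interval] lsf]; have [X [X_below X_factor]] := lsf w.
have [F F_interval] := fin_interval w w.
exists X; split=> // B XB; exists (F ++ B) => x xFB g h t.
have [xF xB] : ~ List.In x F /\ ~ List.In x B.
  by split=> x_in; apply: xFB; apply: List.in_or_app; [left | right].
case: (classic (hom_nz x w)) => [x_to_w | no_hom]; last first.
  have -> : g = 0 by apply/eqP; apply: contra_notT no_hom => g_nz; exists g.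
  by rewrite comp0 act0.
have x_below_w : prec x w.
  split; first exact: preceq_step.
  by move=> wx; apply: xF; apply: F_interval; split=> //; apply: preceq_step.
have [n [xs [gs [hs [xsX ->]]]]] := X_factor x g x_below_w.
apply: (big_ind (fun f => act (comp h f) t = 0)).
- by rewrite comp0 act0.
- by move=> f f' f0 f'0; rewrite compD actD f0 f'0 addr0.
- by move=> j _; rewrite comp_assoc; apply: XB (xsX j) x xB _ _ _.
Qed.

Section Extension.
Variables (P T Q : lmodule E).
Variables (i : forall x, Mob P x -> Mob T x) (p : forall x, Mob T x -> Mob Q x).
Hypothesis E_lslf : left_strictly_locally_finite E.
Hypothesis PTQ_exact : short_exact i p.
Hypotheses (P_cf : contrafinite P) (Q_cf : contrafinite Q).

Lemma short_exact_vanishes_through (w y : Ob E) :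
  (forall (h : Hom w y) (u : Mob P w), act h u = 0) ->
  exists B, vanishes_through T w y B.
Proof.
case: PTQ_exact => [[i_lin i_nat] [[_ p_nat] [_ [_ p_ker]]]] Pwy0.
have [AQ AQ0] := Q_cf w; exists AQ => x xAQ g h t.
have : p (act g t) = 0 by rewrite p_nat; apply: AQ0.
case/p_ker => u gt_eq.
by rewrite act_comp -gt_eq -i_nat Pwy0 (linear_map0 (i_lin y)).
Qed.

Lemma short_exact_vanishes_through_all (y w : Ob E) :
  exists B, vanishes_through T w y B.
Proof.
have [AP AP0] := P_cf y.
have prec_wf := wf_strict_order_on_seq AP (@prec_trans) (@prec_irrefl).
elim/(well_founded_ind prec_wf): w => w IHw.
have [X [X_below X_reduce]] := vanishes_through_below T w y E_lslf.
suff [B XB] : exists B, forall x, List.In x X -> vanishes_through T x y B.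
  exact: X_reduce XB.
apply: upclosed_finite_choice => [x B B' | x xX].
  exact: vanishes_throughS.
case: (classic (List.In x AP)) => [xAP | xAP].
  exact: IHw (conj (X_below x xX) xAP).
by apply: short_exact_vanishes_through => h u; apply: AP0.
Qed.

End Extension.

End Category.

Theorem lemma4p8 (k : fieldType) (E : klinCat k)
  (P T Q : lmodule E)
  (i : forall x, Mob P x -> Mob T x) (p : forall x, Mob T x -> Mob Q x) :
  left_strictly_locally_finite E ->
  short_exact i p ->
  contrafinite P -> contrafinite Q -> contrafinite T.
Proof.
move=> E_lslf PTQ_exact P_cf Q_cf y.
have [B vanB] :=
  short_exact_vanishes_through_all E_lslf PTQ_exact P_cf Q_cf y y.
by exists B => x xB f v; rewrite -(comp_idl f); apply: vanB.
Qed.
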